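(* Let $n_1,n_2$ be coprime positive integers with $n_2<n_1$ and $n_1>1$, and let $r_0$ be a real number with $0\le r_0<1$. Define $a_0,\dots,a_L$, $n_1,\dots,n_{L+2}$, $b_0,b_1,\dots$, $r_0,r_1,\dots$ and $d_i$ as in the context. Let $k$ be a positive integer with $k<L$, and assume $a_i=b_i$ for all $0\le i\le k$. Then: (i) if $k<L-1$ and $|d_k|<\frac{1}{n_{k+1}(n_{k+1}-1)}$, then $a_{k+1}=b_{k+1}$; (ii) if $k=L-1$ and $|d_{L-1}|<\frac{1}{n_L(n_L+1)}$, then $a_L=b_L$ or $a_L-1=b_L$.
   Context: Expansion of $n_2/n_1$ (Euclidean algorithm): set $a_0=0$ and, for $i=1,2,\dots$, $a_i=\lfloor n_i/n_{i+1}\rfloor$ and $n_{i+2}=n_i-a_in_{i+1}$, stopping at the index $L$ with $n_{L+2}=0$; then $n_{L+1}=1$ (by coprimality), $n_L=a_L\ge 2$, and $n_2/n_1=[0,a_1,\dots,a_L]$, i.e. $\frac{n_i}{n_{i+1}}=a_i+\frac{n_{i+2}}{n_{i+1}}$ for $1\le i\le L$. Expansion of $r_0$: set $b_0=\lfloor r_0\rfloor=0$ and, for $i\ge1$, as long as $r_{i-1}\neq0$, $b_i=\lfloor 1/r_{i-1}\rfloor$ and $r_i=1/r_{i-1}-b_i$ (so $\frac{1}{r_{i-1}}=b_i+r_i$ with $0\le r_i<1$). For each index $i\le L$ for which $r_i$ is defined, set $d_i=r_i-\frac{n_{i+2}}{n_{i+1}}$. (The conclusion includes that the relevant $b_{k+1}$,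 resp. $b_L$, is defined.) *)

From HB Require Import structures.
From mathcomp Require Import all_boot all_order all_algebra.
From mathcomp Require Import reals.
Set Implicit Arguments. Unset Strict Implicit. Unset Printing Implicit Defensive.
Import Order.TTheory GRing.Theory Num.Theory.
Local Open Scope ring_scope.

(* Euclidean algorithm on n2/n1.  npair n1 n2 j = (n_{j+1}, n_{j+2}). *)
Fixpoint npair (n1 n2 : nat) (j : nat) : nat * nat :=
  match j with
  | 0 => (n1, n2)
  | j'.+1 => let p := npair n1 n2 j' in (p.2, (p.1 %% p.2)%N)
  end.

(* nn n1 n2 i = n_i  (meaningful for i >= 1). *)
Definition nn (n1 n2 : nat) (i : nat) : nat := (npair n1 n2 i.-1).1.

Definition aa (n1 n2 : nat) (i : nat) : nat :=
  if i is 0 then 0%N else (nn n1 n2 i %/ nn n1 n2 i.+1)%N.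

Fixpoint rr (R : realType) (r0 : R) (i : nat) : option R :=
  match i with
  | 0 => Some r0
  | i'.+1 => match rr r0 i' with
             | Some r => if r == 0 then None
                         else Some (r^-1 - (Num.floor (r^-1))%:~R)
             | None => None
             end
  end.

Definition bb (R : realType) (r0 : R) (i : nat) : option int :=
  match i with
  | 0 => Some (Num.floor r0)
  | i'.+1 => match rr r0 i' with
             | Some r => if r == 0 then None else Some (Num.floor (r^-1))
             | None => None
             end
  end.

From HB Require Import structures.
From mathcomp Require Import all_boot all_order all_algebra.
From mathcomp Require Import reals ring lra zify.
Import Order.TTheory GRing.Theory Num.Theory.
Local Open Scope ring_scope.

(* Write q = n_{k+1}, p = n_{k+2} and q = a p + s, so that a = a_{k+1}.  If
   0 < s < p, then 1/a - p/q = s/(aq) and p/q - 1/(a+1) = (p - s)/(q(a+1)) are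
   both at least 1/(q(q-1)), so the bound on d_k puts r_k strictly between
   1/(a+1) and 1/a, and b_{k+1} = floor(1/r_k) = a.  At the last step s = 0, so
   p/q = 1/a and the weaker window 1/(q(q+1)) <= 1/(a(a+1)) only gives
   a - 1 < 1/r_k < a + 1. *)

Section InverseWindow.
Context {R : realFieldType}.
Implicit Types u x c a b p q s : R.

Lemma ltr_dist_mulr {u x c} : 0 < c -> `|u - x| < c^-1 -> `|u * c - x * c| < 1.
Proof. by move=> c_gt0; rewrite -mulrBl normrM (gtr0_norm c_gt0) -ltr_pdivlMr // mul1r. Qed.

Lemma invr_bounds u a b : 0 < u -> a * u < 1 < b * u -> a < u^-1 < b.
Proof. by move=> u_gt0; rewrite -[u^-1]mul1r ltr_pdivlMr // ltr_pdivrMr. Qed.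

Lemma invr_near_ratio {u p q} a s :
  1 <= s -> s + 1 <= p -> 1 <= a -> q = a * p + s ->
  `|u - p / q| < (q * (q - 1))^-1 -> 0 < u /\ a < u^-1 < a + 1.
Proof.
move=> s_ge1 sp a_ge1 q_eq.
have q_gt1 : 1 < q by nra.
have c_gt0 : 0 < q * (q - 1) by nra.
have ratio_mul : p / q * (q * (q - 1)) = p * (q - 1).
  by field; rewrite gt_eqF ?(lt_trans ltr01).
move=> /(ltr_dist_mulr c_gt0); rewrite ratio_mul ltr_norml => /andP[lo hi].
have u_gt0 : 0 < u by nra.
by split=> //; apply: invr_bounds => //; apply/andP; split; nra.
Qed.

Lemma invr_near_inv {u a} :
  1 <= a -> `|u - a^-1| < (a * (a + 1))^-1 -> 0 < u /\ a - 1 < u^-1 < a + 1.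
Proof.
move=> a_ge1.
have c_gt0 : 0 < a * (a + 1) by nra.
have inv_mul : a^-1 * (a * (a + 1)) = a + 1.
  by field; rewrite gt_eqF ?(lt_le_trans ltr01).
move=> /(ltr_dist_mulr c_gt0); rewrite inv_mul ltr_norml => /andP[lo hi].
have u_gt0 : 0 < u by nra.
by split=> //; apply: invr_bounds => //; apply/andP; split; nra.
Qed.

End InverseWindow.

Section FloorInverse.
Context {R : archiRealFieldType}.
Implicit Types u : R.

Lemma floor_inv_near_ratio {u} {p q : nat} :
  (0 < p < q)%N -> (0 < q %% p)%N ->
  `|u - p%:R / q%:R| < (q%:R * (q%:R - 1))^-1 ->
  0 < u /\ Num.floor u^-1 = (q %/ p)%:Z.
Proof.
move=> /andP[p_gt0 pq] s_gt0 near.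
have [||||u_gt0 /andP[lo hi]] :=
  invr_near_ratio (q %/ p)%:R (q %% p)%:R _ _ _ _ near.
- by rewrite ler1n.
- by rewrite natr1 ler_nat ltn_pmod.
- by rewrite ler1n divn_gt0 // ltnW.
- by rewrite {1}(divn_eq q p) natrD natrM.
by split=> //; apply: floor_def; rewrite ltW //= intrD hi.
Qed.

Lemma floor_inv_near_ratio_dvd {u} {p q : nat} :
  (0 < p < q)%N -> (p %| q)%N ->
  `|u - p%:R / q%:R| < (q%:R * (q%:R + 1))^-1 ->
  0 < u /\ (Num.floor u^-1 = (q %/ p)%:Z \/ Num.floor u^-1 = (q %/ p)%:Z - 1).
Proof.
move=> /andP[p_gt0 pq] /divnK q_eq near; set a := (q %/ p)%N in q_eq *.
have a_gt1 : (1 < a)%N by nia.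
have aq : (a <= q)%N by nia.
have ratio : p%:R / q%:R = (a%:R)^-1 :> R.
  by rewrite -q_eq natrM invfM mulrCA divff ?mulr1 // pnatr_eq0 -lt0n.
have window : (q%:R * (q%:R + 1))^-1 <= (a%:R * (a%:R + 1))^-1 :> R.
  by rewrite !natr1 -!natrM lef_pV2 ?posrE ?ltr0n ?ler_nat ?leq_mul //; lia.
rewrite ratio in near.
have [|u_gt0 /andP[lo hi]] := invr_near_inv _ (lt_le_trans near window).
  by rewrite ler1n ltnW.
split=> //; case: (lerP a%:R u^-1) => [a_le|a_gt]; [left|right]; apply: floor_def.
  by rewrite a_le /= intrD hi.
by rewrite subrK intrB /= a_gt andbT ltW.
Qed.

End FloorInverse.

Lemma nnSS n1 n2 i : (1 <= i)%N -> nn n1 n2 i.+2 = (nn n1 n2 i %% nn n1 n2 i.+1)%N.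
Proof. by case: i. Qed.

Lemma nnSS_lt n1 n2 i :
  (1 <= i)%N -> (0 < nn n1 n2 i.+1)%N -> (nn n1 n2 i.+2 < nn n1 n2 i.+1)%N.
Proof. by move=> i_ge1 n_gt0; rewrite nnSS // ltn_pmod. Qed.

Lemma nn_gt0 n1 n2 L i : (0 < n1)%N -> (0 < n2)%N ->
  (forall j, (1 <= j)%N -> (j < L)%N -> nn n1 n2 j.+2 <> 0%N) ->
  (1 <= i <= L.+1)%N -> (0 < nn n1 n2 i)%N.
Proof.
move=> n1_gt0 n2_gt0 nn_neq0; case: i => [|[|[|j]]] //= i_le.
by rewrite lt0n; apply/eqP/nn_neq0; lia.
Qed.

Lemma bbS_floor {R : realType} {r0 u : R} {i} :
  rr r0 i = Some u -> u != 0 -> bb r0 i.+1 = Some (Num.floor u^-1).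
Proof. by rewrite /bb => -> /negbTE ->. Qed.

Theorem lemma2 (R : realType) (n1 n2 : nat) (r0 : R) (L k : nat) :
  (0 < n1)%N -> (0 < n2)%N -> coprime n1 n2 -> (n2 < n1)%N -> (1 < n1)%N ->
  0 <= r0 -> r0 < 1 ->
  (* L is the stopping index: n_{L+2} = 0 and n_{i+2} <> 0 for 1 <= i < L *)
  (1 <= L)%N -> nn n1 n2 L.+2 = 0%N ->
  (forall i, (1 <= i)%N -> (i < L)%N -> nn n1 n2 i.+2 <> 0%N) ->
  (0 < k)%N -> (k < L)%N ->
  (forall i, (i <= k)%N -> bb r0 i = Some (Posz (aa n1 n2 i))) ->
  ((k < L.-1)%N ->
     (exists rk, rr r0 k = Some rk /\
        `|rk - (nn n1 n2 k.+2)%:R / (nn n1 n2 k.+1)%:R|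
          < ((nn n1 n2 k.+1)%:R * ((nn n1 n2 k.+1)%:R - 1))^-1) ->
     bb r0 k.+1 = Some (Posz (aa n1 n2 k.+1)))
  /\
  (k = L.-1 ->
     (exists rk, rr r0 L.-1 = Some rk /\
        `|rk - (nn n1 n2 L.+1)%:R / (nn n1 n2 L)%:R|
          < ((nn n1 n2 L)%:R * ((nn n1 n2 L)%:R + 1))^-1) ->
     bb r0 L = Some (Posz (aa n1 n2 L)) \/
     bb r0 L = Some (Posz (aa n1 n2 L) - 1)).
Proof.
move=> n1_gt0 n2_gt0 _ _ _ _ _ _ nn_stop nn_neq0 k_gt0 kL _.
have nn_pos i : (1 <= i <= L.+1)%N -> (0 < nn n1 n2 i)%N by exact: nn_gt0.
have euclid_lt : (0 < nn n1 n2 k.+2 < nn n1 n2 k.+1)%N.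
  by rewrite nn_pos ?nnSS_lt ?nn_pos //; lia.
split=> [kL1 [u [ru near]] | k_eq [u [ru near]]].
  have [|u_gt0 fl] := floor_inv_near_ratio euclid_lt _ near.
    by rewrite -nnSS ?nn_pos //; lia.
  by rewrite (bbS_floor ru (lt0r_neq0 u_gt0)) fl.
have L_eq : L = k.+1 by lia.
subst L; rewrite /= in ru near.
have [|u_gt0 fl] := floor_inv_near_ratio_dvd euclid_lt _ near.
  by rewrite /dvdn -nnSS // nn_stop.
by rewrite (bbS_floor ru (lt0r_neq0 u_gt0)); case: fl => ->; [left | right].
Qed.
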